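(* Let $\Sigma \in \mathbb{R}^{3\times 3}$ be a symmetric positive definite matrix and let $\mathbf{c}_1,\dots,\mathbf{c}_\kappa \in \mathbb{R}^3$. For $k=1,\dots,\kappa$ define $\phi_k:\mathbb{R}^3\to\mathbb{R}$ by $\phi_k(\mathbf{x}) = \exp\!\big(-(\mathbf{x}-\mathbf{c}_k)^\top \Sigma^{-1}(\mathbf{x}-\mathbf{c}_k)\big)$, and let $\Phi:\mathbb{R}^3\to\mathbb{R}^\kappa$, $\Phi(\mathbf{x}) = [\phi_1(\mathbf{x}),\dots,\phi_\kappa(\mathbf{x})]^\top$. If the points $\mathbf{c}_1,\dots,\mathbf{c}_\kappa$ do not all lie in a common (affine) hyperplane of $\mathbb{R}^3$, then $\Phi$ is injective.
   Context: A hyperplane of $\mathbb{R}^3$ means a set of the form $\{\mathbf{c}\in\mathbb{R}^3 : \mathbf{b}^\top \mathbf{c} = a\}$ with $\mathbf{b}\in\mathbb{R}^3\setminus\{0\}$, $a\in\mathbb{R}$. *)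

From HB Require Import structures.
From mathcomp Require Import all_boot all_order all_algebra.
From mathcomp Require Import all_classical all_reals all_analysis.
Set Implicit Arguments. Unset Strict Implicit. Unset Printing Implicit Defensive.
Import Order.TTheory GRing.Theory Num.Theory.
Local Open Scope ring_scope.

Definition sym_posdef (R : realType) (S : 'M[R]_3) : Prop :=
  S^T = S /\ forall v : 'cV[R]_3, v != 0 -> 0 < (v^T *m S *m v) 0 0.

Definition gauss_feature (R : realType) (Sigma : 'M[R]_3) (c x : 'cV[R]_3) : R :=
  expR (- ((x - c)^T *m invmx Sigma *m (x - c)) 0 0).

Definition Phi (R : realType) (kappa : nat) (Sigma : 'M[R]_3)
  (c : 'I_kappa -> 'cV[R]_3) (x : 'cV[R]_3) : 'cV[R]_kappa :=
  \col_(k < kappa) gauss_feature Sigma (c k) x.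

Definition in_hyperplane (R : realType) (b : 'cV[R]_3) (a : R) (y : 'cV[R]_3) : Prop :=
  (b^T *m y) 0 0 = a.

Definition all_in_common_hyperplane (R : realType) (kappa : nat)
  (c : 'I_kappa -> 'cV[R]_3) : Prop :=
  exists (b : 'cV[R]_3) (a : R), b != 0 /\ forall k, in_hyperplane b a (c k).

From HB Require Import structures.
From mathcomp Require Import all_boot all_order all_algebra.
From mathcomp Require Import all_classical all_reals all_analysis.
From mathcomp Require Import ring.
Set Implicit Arguments. Unset Strict Implicit. Unset Printing Implicit Defensive.
Import Order.TTheory GRing.Theory Num.Theory.
Local Open Scope ring_scope.

(* Equal Gaussian features at x and y mean x and y are at the same Sigma^-1-distance from
   the centre c.  Expanding the two quadratic forms, the terms quadratic in c cancel, so
   every centre satisfies one affine equation with normal Sigma^-1 (x - y), which is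
   nonzero when x <> y: all centres would lie in a common hyperplane. *)

Lemma trmx11 (R : Type) (A : 'M[R]_1) : A^T = A.
Proof. by apply/matrixP => i j; rewrite !ord1 mxE. Qed.

Section SymmetricForm.

Variables (R : numFieldType) (n : nat) (M : 'M[R]_n).
Hypothesis symM : M^T = M.

Lemma sym_formC (u v : 'cV[R]_n) : u^T *m M *m v = v^T *m M *m u.
Proof. by rewrite -[LHS]trmx11 !trmx_mul symM trmxK mulmxA. Qed.

Lemma sym_formB (u v : 'cV[R]_n) :
  (u - v)^T *m M *m (u - v)
  = u^T *m M *m u - (v^T *m M *m u) *+ 2 + v^T *m M *m v.
Proof.
rewrite mulmxBr [(u - v)^T]linearB /= !mulmxBl [u^T *m M *m v]sym_formC.
by apply/matrixP => i j; rewrite !mxE; ring.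
Qed.

Lemma sym_form_equidistant (x y c : 'cV[R]_n) :
  ((x - c)^T *m M *m (x - c)) 0 0 = ((y - c)^T *m M *m (y - c)) 0 0 ->
  ((M *m (x - y))^T *m c) 0 0
  = ((x^T *m M *m x) 0 0 - (y^T *m M *m y) 0 0) / 2%:R.
Proof.
move=> equidist.
have -> : (M *m (x - y))^T *m c = c^T *m M *m x - c^T *m M *m y.
  by rewrite trmx_mul symM (sym_formC (x - y)) mulmxBr.
move: equidist; rewrite !sym_formB.
move: (x^T *m M *m x) (y^T *m M *m y) (c^T *m M *m x) (c^T *m M *m y)
  (c^T *m M *m c) => X Y P Q C; rewrite !mxE => equidist.
apply: (canRL (mulfK _)); first by rewrite pnatr_eq0.
have -> : X 0 0 - Y 0 0 = (X 0 0 - P 0 0 *+ 2 + C 0 0)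
    - (Y 0 0 - Q 0 0 *+ 2 + C 0 0) + (P 0 0 - Q 0 0) * 2%:R by ring.
by rewrite equidist subrr add0r.
Qed.

End SymmetricForm.

Lemma posdef_unitmx (R : numFieldType) (n : nat) (S : 'M[R]_n) :
  (forall v : 'cV[R]_n, v != 0 -> 0 < (v^T *m S *m v) 0 0) -> S \in unitmx.
Proof.
move=> posS; rewrite unitmxE unitfE; apply/det0P => -[v v_neq0 vS0].
have := posS v^T; rewrite trmx_eq0 trmxK vS0 mul0mx mxE ltxx.
by move/(_ v_neq0).
Qed.

Lemma gauss_feature_eq_dist (R : realType) (Sigma : 'M[R]_3) (c x y : 'cV[R]_3) :
  gauss_feature Sigma c x = gauss_feature Sigma c y ->
  ((x - c)^T *m invmx Sigma *m (x - c)) 0 0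
  = ((y - c)^T *m invmx Sigma *m (y - c)) 0 0.
Proof. by move=> /expR_inj /oppr_inj. Qed.

Theorem mainTheorem1 (R : realType) (kappa : nat) (Sigma : 'M[R]_3)
  (c : 'I_kappa -> 'cV[R]_3) :
  sym_posdef Sigma ->
  ~ all_in_common_hyperplane c ->
  injective (Phi Sigma c).
Proof.
move=> [symS posS] not_coplanar x y eqPhi.
have [//|neq_xy] := eqVneq x y; exfalso; apply: not_coplanar.
have unitS := posdef_unitmx posS.
have symSinv : (invmx Sigma)^T = invmx Sigma by rewrite trmx_inv symS.
set M := invmx Sigma.
exists (M *m (x - y)), (((x^T *m M *m x) 0 0 - (y^T *m M *m y) 0 0) / 2%:R).
split.
  apply: contraNneq neq_xy => /(congr1 (mulmx Sigma)).
  by rewrite mulKVmx // mulmx0 => /eqP; rewrite subr_eq0.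
move=> k; apply: sym_form_equidistant => //; apply: gauss_feature_eq_dist.
by have := congr1 (fun v : 'cV_kappa => v k 0) eqPhi; rewrite /= !mxE.
Qed.
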